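(* Let $m\ge1$, let $\Theta$ be a non-degenerate quadratic form of type $\pm1$ on $V=\mathbb{F}_4^{2m}$ with polar symplectic form $\langle\cdot,\cdot\rangle$, and let $\Theta^*=\mathrm{Tr}_{\mathbb{F}_4/\mathbb{F}_2}\circ\Theta$ and $\langle u,v\rangle^*=\mathrm{Tr}_{\mathbb{F}_4/\mathbb{F}_2}(\langle u,v\rangle)$, regarding $V$ as $\mathbb{F}_2^{4m}$. Let $X=\{a\in V:\Theta^*(a)=1\}$. Let $G_1$ be the graph on $X$ with $a\sim b$ iff $a\neq b$ and $\langle a,b\rangle^*=0$ (a copy of $NO^{\pm}(4m,2)$), and $G_2$ the graph on $X$ with $a\sim b$ iff $a\ne b$ and $\Theta(a+b)=\langle a,b\rangle^2$ (a copy of $NO^{\mp}(2m+1,4)$). Let $\lambda\in\mathbb{F}_4\setminus\mathbb{F}_2$ be a root of $x^2+x+1$ and $A=\{a\in\mathbb{F}_4^{2m}:\Theta(a)=\lambda\}$, $B=\{a\in\mathbb{F}_4^{2m}:\Theta(a)=\lambda+1\}$. Then $X=A\cup B$ and the Seidel switching between $G_1$ and $G_2$ is the switching with respect to the sets $A$, $B$; that is, $G_2$ is obtained from $G_1$ by Seidel switching with respect to $A$ (equivalently $B$). Moreover $|A|=|B|=2^{4m-2}\mp2^{2m-2}$, and the subgraphs induced on $A$ and on $B$ are regular of degree $2^{4m-3}\mp2^{2m-2}-1$.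
   Context: For a quadratic form $\Theta$ on $\mathbb{F}_q^{n}$ ($q$ even) the polar form is $f(u,v)=\Theta(u+v)+\Theta(u)+\Theta(v)$. A form on $\mathbb{F}_q^{2m}$ is non-degenerate if $f$ is non-degenerate, of type $+1$ (hyperbolic) if its Witt index is $m$, of type $-1$ (elliptic) if it is $m-1$. Seidel switching of a graph with respect to a vertex subset $Y$ replaces all edges between $Y$ and its complement by non-edges and all such non-edges by edges, leaving the rest unchanged. Signs are read consistently (upper with upper). *)

From HB Require Import structures.
From mathcomp Require Import all_boot all_order all_algebra.
Set Implicit Arguments. Unset Strict Implicit. Unset Printing Implicit Defensive.
Import GRing.Theory.
Local Open Scope ring_scope.

Definition polar (F : fieldType) (n : nat) (Q : 'rV[F]_n -> F) (u v : 'rV[F]_n) : F :=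
  Q (u + v) + Q u + Q v.

Definition is_quadform (F : fieldType) (n : nat) (Q : 'rV[F]_n -> F) : Prop :=
  [/\ forall (c : F) v, Q (c *: v) = c ^+ 2 * Q v,
      forall u1 u2 v, polar Q (u1 + u2) v = polar Q u1 v + polar Q u2 v,
      forall (c : F) u v, polar Q (c *: u) v = c * polar Q u v,
      forall u v1 v2, polar Q u (v1 + v2) = polar Q u v1 + polar Q u v2 &
      forall (c : F) u v, polar Q u (c *: v) = c * polar Q u v].

Definition qf_nondegenerate (F : fieldType) (n : nat) (Q : 'rV[F]_n -> F) : Prop :=
  forall u, (forall v, polar Q u v = 0) -> u = 0.

Definition totally_singular (F : fieldType) (n k : nat) (Q : 'rV[F]_n -> F)
  (U : 'M[F]_(k, n)) : Prop :=
  forall v : 'rV[F]_n, (v <= U)%MS -> Q v = 0.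

Definition witt_index (F : fieldType) (n : nat) (Q : 'rV[F]_n -> F) (w : nat) : Prop :=
  (exists U : 'M[F]_n, totally_singular Q U /\ \rank U = w) /\
  (forall U : 'M[F]_n, totally_singular Q U -> (\rank U <= w)%N).

(* type of a non-degenerate form on F^(2m): +1 (plus = true) if Witt index m,
   -1 (plus = false) if Witt index m-1 *)
Definition qf_type (F : fieldType) (m : nat) (Q : 'rV[F]_(2 * m) -> F) (plus : bool) : Prop :=
  witt_index Q (if plus then m else m.-1).

(* absolute trace F_4 -> F_2 (values in the prime subfield {0,1} of F) *)
Definition tr4 (F : fieldType) (x : F) : F := x + x ^+ 2.

Definition seidel_switch (T : finType) (adj : rel T) (Y : {set T}) : rel T :=
  fun a b => if (a \in Y) != (b \in Y) then (a != b) && ~~ adj a b else adj a b.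

From HB Require Import structures.
From mathcomp Require Import all_boot all_algebra all_field zify ring.
Import GRing.Theory.
Local Open Scope ring_scope.
Set Implicit Arguments. Unset Strict Implicit. Unset Printing Implicit Defensive.

(* Over F_4 one has Q (a + b) = Q a + Q b + <a, b> and tr4 x = x + x^2, so for a, b in X the
   second adjacency Q (a + b) = <a, b>^2 reads tr4 <a, b> = Q a + Q b.  Since Q a and Q b lie
   in {lam, lam + 1}, this is the first adjacency when Q a = Q b and its negation otherwise:
   the switching with respect to A.  The sizes come from the number of singular vectors of Q,
   obtained by double counting the pairs (w, v) with w in a maximal totally singular subspace W
   and v outside its polar W^perp, together with the fact that scalings permute the nonzero
   level sets of Q.  For the degrees, fix a with Q a = mu and sort the vectors u by the pair
   (Q u, <a, u>): translations by multiples of a and scalings identify enough of these fibres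
   to count those with Q u = mu and tr4 <a, u> = 0. *)

Section Char2Field.
Variables (F : fieldType) (charF : 2 \in [pchar F]).

Lemma sqrD_pchar2 (x y : F) : (x + y) ^+ 2 = x ^+ 2 + y ^+ 2.
Proof. by rewrite sqrrD mulr2n addrr_pchar2 // addr0. Qed.

Lemma tr4_eq0 (x : F) : (tr4 x == 0) = (x == 0) || (x == 1).
Proof.
by rewrite /tr4 expr2 -{1}[x]mulr1 -mulrDr mulf_eq0 addrC addr_eq0 oppr_pchar2.
Qed.

Lemma addr_eq_sqr_tr4 (x p : F) : (x + p == p ^+ 2) = (tr4 p == x).
Proof. by rewrite (can2_eq (addrK p) (subrK p)) oppr_pchar2 // addrC eq_sym. Qed.

Section CubeRoot.
Variables (lam : F) (hlam : lam ^+ 2 + lam + 1 = 0).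

Lemma tr4_eq1 (x : F) : (tr4 x == 1) = (x == lam) || (x == lam + 1).
Proof.
have factor : (x - lam) * (x - (lam + 1)) = tr4 x - 1.
  have -> : (x - lam) * (x - (lam + 1))
          = tr4 x + (lam ^+ 2 + lam + 1) - 1 - x * (lam + 1) *+ 2 by rewrite /tr4; ring.
  by rewrite hlam addr0 mulr2n addrr_pchar2 // subr0.
by rewrite -subr_eq0 -factor mulf_eq0 !subr_eq0.
Qed.

Lemma root_succ : (lam + 1) ^+ 2 + (lam + 1) + 1 = 0.
Proof.
have -> : (lam + 1) ^+ 2 + (lam + 1) + 1 = lam ^+ 2 + lam + 1 + (lam + 1) *+ 2 by ring.
by rewrite hlam mulr2n addrr_pchar2 // addr0.
Qed.

Lemma root_neq0 : lam != 0.
Proof. by apply/eqP => lam0; move: hlam; rewrite lam0 expr0n !add0r; apply/eqP/oner_neq0. Qed.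

Lemma root_neq1 : lam != 1.
Proof.
by apply/eqP => lam1; move: hlam; rewrite lam1 expr1n addrr_pchar2 // add0r; apply/eqP/oner_neq0.
Qed.

Lemma succ_neq : lam + 1 != lam.
Proof. by rewrite -subr_eq0 addrAC subrr add0r oner_eq0. Qed.

End CubeRoot.
End Char2Field.

Lemma card_preim_inj (T : finType) (f : T -> T) (P : pred T) :
  injective f -> #|[set x | P (f x)]| = #|[set x | P x]|.
Proof.
move=> injf; rewrite -[RHS](card_preimset _ injf).
by apply: eq_card => x; rewrite !inE.
Qed.

Lemma card_fibers (T K : finType) (S : {set T}) (f : T -> K) :
  #|S| = (\sum_(d : K) #|[set u in S | f u == d]|)%N.
Proof.
rewrite -sum1_card (partition_big f predT) //; apply: eq_bigr => d _.
by rewrite -sum1_card; apply: eq_bigl => u; rewrite inE.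
Qed.

Lemma double_count (T1 T2 : finType) (A : {set T1}) (B : {set T2}) (R : T1 -> T2 -> bool) :
  (\sum_(x in A) #|[set y in B | R x y]| = \sum_(y in B) #|[set x in A | R x y]|)%N.
Proof.
under eq_bigr => x _ do rewrite -sum1_card.
rewrite (exchange_big_dep (mem B)) /=; last by move=> x y _; rewrite inE => /andP[].
by apply: eq_bigr => y yB; rewrite -sum1_card; apply: eq_bigl => x; rewrite !inE yB.
Qed.

Lemma sum_nat_const_off (T : finType) (g : T -> nat) i0 x : x != i0 ->
  (forall i, i != i0 -> g i = g x) -> (\sum_i g i = g i0 + #|T|.-1 * g x)%N.
Proof.
move=> xi0 gx; rewrite (bigD1 i0) //= (eq_bigr (fun=> g x)) // sum_nat_const.
by rewrite cardC1.
Qed.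

Lemma sqrtr_pchar2 (F : finFieldType) (charF : 2 \in [pchar F]) (c : F) :
  exists s, s ^+ 2 = c.
Proof.
have /injF_bij[g sqrK sqrtK] : injective (pFrobenius_aut charF) := fmorph_inj _.
by exists (g c); rewrite -pFrobenius_autE sqrtK.
Qed.

Lemma addvv_pchar2 (F : fieldType) n (charF : 2 \in [pchar F]) (v : 'rV[F]_n) :
  v + v = 0.
Proof. by rewrite -[v]scale1r -scalerDl addrr_pchar2 // scale0r. Qed.

Section QuadraticForm.
Variables (F : fieldType) (n : nat) (Q : 'rV[F]_n -> F).
Hypotheses (charF : 2 \in [pchar F]) (hQ : is_quadform Q).
Local Notation pol := (polar Q).

Lemma quadformZ c v : Q (c *: v) = c ^+ 2 * Q v. Proof. by case: hQ. Qed.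
Lemma polarDl u1 u2 v : pol (u1 + u2) v = pol u1 v + pol u2 v. Proof. by case: hQ. Qed.
Lemma polarZl c u v : pol (c *: u) v = c * pol u v. Proof. by case: hQ. Qed.
Lemma polarDr u v1 v2 : pol u (v1 + v2) = pol u v1 + pol u v2. Proof. by case: hQ. Qed.
Lemma polarZr c u v : pol u (c *: v) = c * pol u v. Proof. by case: hQ. Qed.

Lemma quadform0 : Q 0 = 0.
Proof. by rewrite -(scale0r 0) quadformZ expr0n mul0r. Qed.

Lemma polarC u v : pol u v = pol v u.
Proof. by rewrite /polar [u + v]addrC -addrA [Q u + _]addrC addrA. Qed.

Lemma polar0l v : pol 0 v = 0.
Proof. by rewrite -(scale0r 0) polarZl mul0r. Qed.

Lemma polar0r v : pol v 0 = 0.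
Proof. by rewrite polarC polar0l. Qed.

Lemma quadformD u v : Q (u + v) = Q u + Q v + pol u v.
Proof.
transitivity (Q (u + v) + Q u *+ 2 + Q v *+ 2); first by rewrite !mulrn_pchar // !addr0.
by rewrite /polar; ring.
Qed.

Lemma polarxx u : pol u u = 0.
Proof. by rewrite /polar addvv_pchar2 // quadform0 add0r addrr_pchar2. Qed.

Definition gram_mx : 'M[F]_n := \matrix_(i, j) pol (delta_mx 0 i) (delta_mx 0 j).

Lemma polarE u v : pol u v = (u *m gram_mx *m v^T) 0 0.
Proof.
have polar_suml (c : 'I_n -> F) w :
    pol (\sum_i c i *: delta_mx 0 i) w = \sum_i c i * pol (delta_mx 0 i) w.
  by elim/big_rec2: _ => [|i y1 y2 _ <-]; rewrite ?polar0l ?polarDl ?polarZl.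
have polar_sumr (c : 'I_n -> F) w :
    pol w (\sum_i c i *: delta_mx 0 i) = \sum_i c i * pol w (delta_mx 0 i).
  by elim/big_rec2: _ => [|i y1 y2 _ <-]; rewrite ?polar0r ?polarDr ?polarZr.
rewrite {1}(row_sum_delta u) polar_suml mxE.
under eq_bigr => i _ do rewrite {1}(row_sum_delta v) polar_sumr.
under [RHS]eq_bigr => j _ do rewrite !mxE big_distrl /=.
rewrite exchange_big /=; apply: eq_bigr => i _.
rewrite big_distrr /=; apply: eq_bigr => j _.
by rewrite !mxE -mulrA [v 0 j * _]mulrC.
Qed.

Lemma unitmx_gram : qf_nondegenerate Q -> gram_mx \in unitmx.
Proof.
move=> hnd; rewrite -row_free_unit -kermx_eq0; apply/rowV0P => u /sub_kermxP uP0.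
by apply: hnd => v; rewrite polarE uP0 mul0mx mxE.
Qed.

End QuadraticForm.

Lemma submxDr (F : fieldType) m1 m2 n (A B : 'M[F]_(m1, n)) (C : 'M_(m2, n)) :
  (B <= C)%MS -> ((A + B)%R <= C)%MS = (A <= C)%MS.
Proof.
move=> BC; apply/idP/idP => [ABC|AC]; last exact: addmx_sub.
by rewrite -(addrK B A); apply: addmx_sub; rewrite ?eqmx_opp.
Qed.

Section FiniteRowSpaces.
Variables (F : finFieldType) (n : nat).

Lemma card_rV : #|'rV[F]_n| = (#|F| ^ n)%N.
Proof. by rewrite card_mx mul1n. Qed.

Lemma card_rowspace k (M : 'M[F]_(k, n)) :
  #|[set v : 'rV[F]_n | (v <= M)%MS]| = (#|F| ^ \rank M)%N.
Proof.
have -> : [set v : 'rV[F]_n | (v <= M)%MS] = [set x *m row_base M | x : 'rV_(\rank M)].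
  apply/setP => v; rewrite inE; apply/idP/imsetP => [vM|[x _ ->]].
    have /submxP[x ->] : (v <= row_base M)%MS by rewrite eq_row_base.
    by exists x.
  by rewrite (submx_trans (submxMl _ _)) ?eq_row_base.
by rewrite card_imset ?card_mx ?mul1n //; apply: row_free_inj (row_base_free M).
Qed.

Lemma card_linear_fiber k (M : 'M[F]_(k, n)) (f : 'rV[F]_n -> F) u0 d :
  {morph f : u v / u + v} -> (forall c, {morph f : u / c *: u >-> c * u}) ->
  (u0 <= M)%MS -> f u0 != 0 ->
  (#|F| * #|[set u | (u <= M)%MS && (f u == d)]| = #|F| ^ \rank M)%N.
Proof.
move=> fD fZ u0M fu0; set e := (f u0)^-1 *: u0.
have fe : f e = 1 by rewrite fZ mulVf.
have eM : (e <= M)%MS by rewrite scalemx_sub.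
have fiber_eq d1 d2 : #|[set u | (u <= M)%MS && (f u == d1)]|
                    = #|[set u | (u <= M)%MS && (f u == d2)]|.
  rewrite -(card_preim_inj _ (addIr ((d1 - d2) *: e))); apply: eq_card => u.
  rewrite !inE fD fZ fe mulr1; congr andb; last first.
    by apply/eqP/eqP => [fuD|->]; [rewrite -(addrK (d1 - d2) (f u)) fuD subKr|rewrite addrC subrK].
  by rewrite submxDr // scalemx_sub.
rewrite -card_rowspace (card_fibers _ f) -sum_nat_const.
by apply: eq_big => // d' _; rewrite (fiber_eq d d'); apply: eq_card => u; rewrite !inE.
Qed.

End FiniteRowSpaces.

Section PolarPerp.
Variables (F : finFieldType) (n : nat) (Q : 'rV[F]_n -> F).
Hypotheses (charF : 2 \in [pchar F]) (hQ : is_quadform Q) (hnd : qf_nondegenerate Q).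
Local Notation pol := (polar Q).

Definition polar_perp k (U : 'M[F]_(k, n)) : 'M[F]_n := kermx (U *m gram_mx Q)^T.

Lemma sub_polar_perpP k (U : 'M_(k, n)) v :
  reflect (forall w, (w <= U)%MS -> pol w v = 0) (v <= polar_perp U)%MS.
Proof.
have -> : (v <= polar_perp U)%MS = (U *m gram_mx Q *m v^T == 0).
  apply/sub_kermxP/eqP => [|UPv0]; last by rewrite -[v]trmxK -trmx_mul UPv0 trmx0.
  by move/(congr1 trmx); rewrite trmx_mul trmxK trmx0.
apply: (iffP eqP) => [UPv0 _ /submxP[x ->]|polU0].
  by rewrite (polarE hQ) -!mulmxA (mulmxA U) UPv0 !mulmx0 mxE.
apply/matrixP => i j; rewrite ord1 [RHS]mxE -(polU0 (row i U)) ?row_sub //.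
by rewrite (polarE hQ) -!row_mul [RHS]mxE.
Qed.

Lemma rank_polar_perp k (U : 'M_(k, n)) : \rank (polar_perp U) = (n - \rank U)%N.
Proof.
by rewrite mxrank_ker mxrank_tr mxrankMfree // row_free_unit unitmx_gram.
Qed.

Variables (k : nat) (U : 'M[F]_(k, n)).
Hypothesis hts : totally_singular Q U.

Lemma polar_totally_singular u w : (u <= U)%MS -> (w <= U)%MS -> pol u w = 0.
Proof. by move=> uU wU; rewrite /polar !hts ?addmx_sub // !addr0. Qed.

Lemma totally_singular_sub_perp : (U <= polar_perp U)%MS.
Proof.
apply/row_subP => i; apply/sub_polar_perpP => w wU.
exact: polar_totally_singular (row_sub i U).
Qed.

Lemma card_level_notin_perp c :
  (#|F| * #|[set u | ~~ (u <= polar_perp U)%MS & Q u == c]| + #|F| ^ (n - \rank U)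
     = #|F| ^ n)%N.
Proof.
pose O := [set u : 'rV_n | ~~ (u <= polar_perp U)%MS].
pose W := [set w : 'rV_n | (w <= U)%MS].
have cardO : (#|O| + #|F| ^ (n - \rank U) = #|F| ^ n)%N.
  rewrite -rank_polar_perp -card_rowspace -card_rV -(cardsC O); congr (_ + _)%N.
  by apply: eq_card => u; rewrite !inE negbK.
(* Double count the pairs (w, v) in W * O with Q (v + w) = c: translation by w preserves O,
   and for v in O the map w |-> Q (v + w) = Q v + <v, w> is a nonconstant affine form on W. *)
have shift w : w \in W -> #|[set v in O | Q (v + w) == c]| = #|[set u in O | Q u == c]|.
  rewrite inE => wU; rewrite -[RHS](card_preim_inj _ (addIr w)); apply: eq_card => v.
  by rewrite !inE submxDr // (submx_trans wU totally_singular_sub_perp).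
have fiber v : v \in O -> (#|F| * #|[set w in W | Q (v + w) == c]| = #|W|)%N.
  rewrite inE => vO.
  have /existsP[w0 /andP[w0U polw0]] : [exists w0, (w0 <= U)%MS && (pol v w0 != 0)].
    apply: contraR vO => /existsPn polU0; apply/sub_polar_perpP => w wU.
    by apply/eqP; move: (polU0 w); rewrite wU polarC negbK.
  rewrite card_rowspace.
  rewrite -(card_linear_fiber (c - Q v) (polarDr hQ v) (fun a => polarZr hQ a v) w0U polw0).
  congr (_ * _)%N; apply: eq_card => w; rewrite !inE.
  case: (boolP (w <= U)%MS) => //= wU.
  by rewrite quadformD // (hts wU) addr0 [RHS]eq_sym subr_eq addrC.
have W_gt0 : (0 < #|W|)%N by apply/card_gt0P; exists 0; rewrite inE sub0mx.
have double := double_count W O (fun w v => Q (v + w) == c).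
rewrite (eq_bigr _ shift) sum_nat_const in double.
have : (#|F| * #|[set u in O | Q u == c]| * #|W| = #|O| * #|W|)%N.
  by rewrite mulnAC -mulnA double big_distrr /= (eq_bigr _ fiber) sum_nat_const.
move/eqP; rewrite eqn_pmul2r // => /eqP countO.
rewrite -cardO -countO; congr (_ * _ + _)%N.
by apply: eq_card => u; rewrite !inE.
Qed.

Lemma singular_perp_maximal :
  (forall V : 'M[F]_n, totally_singular Q V -> (\rank V <= \rank U)%N) ->
  [set u | (u <= polar_perp U)%MS & Q u == 0] = [set u | (u <= U)%MS].
Proof.
move=> Umax; apply/setP => u; rewrite !inE; apply/andP/idP => [[uK /eqP Qu0]|uU].
  apply: contraT => uNU.
  (* otherwise u would extend U to a larger totally singular subspace *)
  have tsUu : totally_singular Q (U + u)%MS.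
    move=> _ /sub_addsmxP[[x y] /= ->]; rewrite (mx11_scalar y) mul_scalar_mx.
    rewrite quadformD // quadformZ // Qu0 mulr0 addr0 hts ?submxMl // add0r.
    by rewrite polarZr // (sub_polar_perpP _ _ uK) ?submxMl // mulr0.
  have /esym UuU := geq_leqif (mxrank_leqif_sup (addsmxSl U u)).
  by rewrite Umax // in UuU; rewrite (submx_trans (addsmxSr U u) UuU) in uNU.
by rewrite hts // (submx_trans uU totally_singular_sub_perp).
Qed.

End PolarPerp.

Lemma card_singular_witt (F : finFieldType) n (Q : 'rV[F]_n -> F) r :
  2 \in [pchar F] -> is_quadform Q -> qf_nondegenerate Q -> witt_index Q r ->
  (#|F| * #|[set u | Q u == 0%R]| + #|F| ^ (n - r) = #|F| ^ r.+1 + #|F| ^ n)%N.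
Proof.
move=> charF hQ hnd [[U [hts <-]] Umax].
rewrite -(cardsID [set u | (u <= polar_perp Q U)%MS]) mulnDr -addnA.
have -> : [set u | Q u == 0] :&: [set u | (u <= polar_perp Q U)%MS] = [set u | (u <= U)%MS].
  rewrite -(singular_perp_maximal charF hQ hts Umax).
  by apply/setP => u; rewrite !inE andbC.
rewrite card_rowspace -expnS -(card_level_notin_perp charF hQ hnd hts 0).
by congr (_ + (_ * _ + _))%N; apply: eq_card => u; rewrite !inE andbC.
Qed.


Section QuadformLevels.
Variables (F : finFieldType) (n : nat) (Q : 'rV[F]_n -> F).
Hypotheses (charF : 2 \in [pchar F]) (hQ : is_quadform Q).
Local Notation pol := (polar Q).

Lemma card_quadform_level_scale c c' : c != 0 -> c' != 0 ->
  #|[set u | Q u == c]| = #|[set u | Q u == c']|.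
Proof.
move=> c0 c'0; have [s s2] := sqrtr_pchar2 charF (c' / c).
have k0 : c' / c != 0 by rewrite mulf_neq0 ?invr_neq0.
have s0 : s != 0 by move: k0; rewrite -s2 expf_eq0.
rewrite -[RHS](card_preim_inj _ (scalerI s0)); apply: eq_card => u.
by rewrite !inE quadformZ // s2 (can2_eq (mulKf k0) (mulVKf k0)) invf_div divfK.
Qed.

Lemma card_quadform_levels c : c != 0 ->
  (#|[set u | Q u == 0%R]| + #|F|.-1 * #|[set u | Q u == c]| = #|F| ^ n)%N.
Proof.
move=> c0; rewrite -(sum_nat_const_off (g := fun d => #|[set u | Q u == d]|) c0).
  rewrite -card_rV -cardsT (card_fibers _ Q).
  by apply: eq_bigr => d _; apply: eq_card => u; rewrite !inE.
by move=> d d0; apply: card_quadform_level_scale.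
Qed.

Variables (a : 'rV[F]_n).
Hypotheses (hnd : qf_nondegenerate Q) (Qa0 : Q a != 0).

Definition polar_level c d := [set u | (Q u == c) && (pol a u == d)].

Lemma card_polar_hyperplane d : (#|F| * #|[set u | pol a u == d]| = #|F| ^ n)%N.
Proof.
have [u0 polu0] : exists u0, pol a u0 != 0.
  apply/existsP; apply: contraR Qa0 => /existsPn pola0.
  have -> : a = 0 by apply: hnd => v; apply/eqP; rewrite -[_ == _]negbK pola0.
  by rewrite quadform0.
have := card_linear_fiber d (polarDr hQ a) (fun c => polarZr hQ c a) (submx1 u0) polu0.
rewrite mxrank1 => <-; by congr (_ * _)%N; apply: eq_card => u; rewrite !inE submx1.
Qed.

Lemma card_polar_level_orth c c' : #|polar_level c 0| = #|polar_level c' 0|.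
Proof.
have [s s2] := sqrtr_pchar2 charF ((c' - c) / Q a).
rewrite -[RHS](card_preim_inj _ (addIr (s *: a))); apply: eq_card => u; rewrite !inE.
rewrite polarDr // polarZr // polarxx // mulr0 addr0 quadformD // quadformZ //.
rewrite polarZr // polarC s2 divfK //.
case: (eqVneq (pol u a) 0) => [->|]; rewrite ?andbF // mulr0 addr0 !andbT.
by rewrite (can2_eq (addrK _) (subrK _)) subKr.
Qed.

Lemma card_polar_level_scale d : d != 0 -> #|polar_level 0 d| = #|polar_level 0 1|.
Proof.
move=> d0; rewrite -(card_preim_inj _ (scalerI d0)); apply: eq_card => u; rewrite !inE.
rewrite quadformZ // polarZr // mulf_eq0 expf_eq0 (negbTE d0) /=.
by rewrite -[X in d * _ == X]mulr1 (inj_eq (mulfI d0)).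
Qed.

Lemma card_polar_level_shift c d : #|polar_level c d| = #|polar_level (c + Q a + d) d|.
Proof.
rewrite -[RHS](card_preim_inj _ (addIr a)); apply: eq_card => u; rewrite !inE.
rewrite polarDr // polarxx // addr0 quadformD // polarC.
case: (eqVneq (pol u a) d) => [->|]; rewrite ?andbF // !andbT.
by rewrite !(inj_eq (addIr _)).
Qed.

End QuadformLevels.

Section F4.
Variables (F : finFieldType) (hF : #|F| = 4%N).

Lemma pchar_F4 : 2 \in [pchar F].
Proof. exact: (@card_finPcharP _ 2 2). Qed.

Lemma tr4_eq01_F4 (x : F) : (tr4 x == 0) || (tr4 x == 1).
Proof.
have tr4_idem : tr4 x ^+ 2 = tr4 x.
  rewrite /tr4 sqrD_pchar2 ?pchar_F4 // -exprM.
  by rewrite (_ : 2 * 2 = #|F|)%N ?expf_card 1?addrC // hF.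
have : tr4 x * (tr4 x - 1) = 0 by rewrite mulrBr mulr1 -expr2 tr4_idem subrr.
by move/eqP; rewrite mulf_eq0 subr_eq0.
Qed.

Variables (lam : F) (hlam : lam ^+ 2 + lam + 1 = 0).

Lemma sum_F4 (g : F -> nat) : (\sum_d g d = g 0%R + g 1%R + g lam + g (lam + 1)%R)%N.
Proof.
have charF := pchar_F4.
have enum x : [|| x == 0, x == 1, x == lam | x == lam + 1].
  by have := tr4_eq01_F4 x; rewrite tr4_eq0 // (tr4_eq1 charF hlam x) -!orbA.
have hlam1 := root_succ charF hlam.
rewrite (bigD1 0) //= (bigD1 1) ?oner_neq0 //= (bigD1 lam) /= ?root_neq0 ?root_neq1 //.
rewrite (bigD1 (lam + 1)) /= ?(root_neq0 hlam1) ?(root_neq1 charF hlam1) ?succ_neq //.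
rewrite big_pred0 ?addn0 ?addnA //.
by move=> x; case/or4P: (enum x) => /eqP ->; rewrite ?eqxx ?andbF.
Qed.

End F4.

Section F4Quadform.
Variables (F : finFieldType) (hF : #|F| = 4%N) (n : nat) (Q : 'rV[F]_n -> F).
Hypotheses (hQ : is_quadform Q) (hnd : qf_nondegenerate Q).
Variables (mu : F) (hmu : mu ^+ 2 + mu + 1 = 0).
Local Notation pol := (polar Q).

Lemma card_level_polar_trace0 a : Q a = mu ->
  (8 * #|[set b | (Q b == mu) && (tr4 (pol a b) == 0%R)]| + 4 ^ n
     = 8 * #|[set u | Q u == mu]|)%N.
Proof.
move=> Qa; have charF := pchar_F4 hF.
have Qa0 : Q a != 0 by rewrite Qa root_neq0.
pose N c d := #|polar_level Q a c d|.
have hyper d : (4 * #|[set u | pol a u == d]| = 4 ^ n)%N.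
  by rewrite -hF card_polar_hyperplane.
have sum_levels d : (\sum_c N c d = #|[set u | pol a u == d]|)%N.
  rewrite [RHS](card_fibers _ Q); apply: eq_bigr => c _.
  by apply: eq_card => u; rewrite !inE andbC.
have orth c : N c 0 = N mu 0 by apply: card_polar_level_orth.
have orth_sum : (4 * N mu 0%R = #|[set u | pol a u == 0%R]|)%N.
  by rewrite -sum_levels (sum_F4 hF hmu) !(orth 0%R) !(orth 1%R) (orth (mu + 1)); lia.
have singular : #|[set u | Q u == 0]| = (N mu 0%R + 3 * N 0%R 1%R)%N.
  rewrite (card_fibers _ (pol a)) (sum_F4 hF hmu).
  have lvl d : #|[set u in [set u | Q u == 0] | pol a u == d]| = N 0 d.
    by apply: eq_card => u; rewrite !inE.
  rewrite !lvl orth /N (card_polar_level_scale hQ a (root_neq0 hmu)).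
  rewrite (card_polar_level_scale hQ a (root_neq0 (root_succ charF hmu))).
  by rewrite -!addnA !mulSn mul0n addn0.
have shift_sum : (2 * (N 0%R 1%R + N mu 1%R) = #|[set u | pol a u == 1%R]|)%N.
  rewrite -sum_levels (sum_F4 hF hmu) /N.
  rewrite (card_polar_level_shift charF hQ a 0 1) (card_polar_level_shift charF hQ a mu 1) Qa.
  by rewrite add0r addrr_pchar2 // add0r mul2n -addnn [RHS]addnAC -[RHS]addnA.
have trace0 : #|[set b | (Q b == mu) && (tr4 (pol a b) == 0%R)]| = (N mu 0%R + N mu 1%R)%N.
  have -> : [set b | (Q b == mu) && (tr4 (pol a b) == 0)]
          = polar_level Q a mu 0 :|: polar_level Q a mu 1.
    by apply/setP => b; rewrite !inE tr4_eq0 // -andb_orr.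
  rewrite cardsU (_ : _ :&: _ = set0) ?cards0 ?subn0 //.
  apply/setP => b; rewrite !inE andbACA andbb.
  by case: (eqVneq (pol a b) 0) => [->|]; rewrite ?andbF // (eq_sym 0) oner_eq0 !andbF.
have := card_quadform_levels charF hQ (root_neq0 hmu).
rewrite trace0 singular hF; have := hyper 0; have := hyper 1.
rewrite -orth_sum -shift_sum; lia.
Qed.

Lemma quadformD_eq_sqr a b : tr4 (Q a) == 1 -> tr4 (Q b) == 1 ->
  (Q (a + b) == pol a b ^+ 2) = (Q a == mu) (+) (Q b == mu) (+) (tr4 (pol a b) == 0).
Proof.
have charF := pchar_F4 hF.
rewrite !(tr4_eq1 charF hmu) quadformD // addr_eq_sqr_tr4 // => Qa Qb.
have mu_mu1 : mu + (mu + 1) = 1 by rewrite addrA addrr_pchar2 // add0r.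
have mu1_mu : mu + 1 + mu = 1 by rewrite addrC.
move: (tr4 _) (tr4_eq01_F4 hF (pol a b)) => t /orP[]/eqP->.
all: case/orP: Qa => /eqP->; case/orP: Qb => /eqP->.
all: by rewrite ?addrr_pchar2 ?mu_mu1 ?mu1_mu ?eqxx ?(negbTE (succ_neq mu)) ?(eq_sym 0) ?oner_eq0.
Qed.

End F4Quadform.

Lemma expn2_subnK p j : (j <= p)%N -> (2 ^ j * 2 ^ (p - j) = 2 ^ p)%N.
Proof. by move=> jp; rewrite -expnD subnKC. Qed.

Section FormOfTypeF4.
Variables (F : finFieldType) (hF : #|F| = 4%N) (m : nat) (Q : 'rV[F]_(2 * m) -> F).
Variables (plus : bool) (mu : F).
Hypotheses (hm : (1 <= m)%N) (hQ : is_quadform Q) (hnd : qf_nondegenerate Q).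
Hypotheses (htype : qf_type Q plus) (hmu : mu ^+ 2 + mu + 1 = 0).

Lemma card_level_F4 : #|[set u | Q u == mu]| =
  (if plus then 2 ^ (4 * m - 2) - 2 ^ (2 * m - 2) else 2 ^ (4 * m - 2) + 2 ^ (2 * m - 2))%N.
Proof.
have charF := pchar_F4 hF.
have := card_singular_witt charF hQ hnd htype.
have := card_quadform_levels charF hQ (root_neq0 hmu).
have e2m : (4 ^ (2 * m) = 2 ^ 2 * 2 ^ (4 * m - 2))%N.
  by rewrite expn2_subnK -?[(4 * m)%N]/(2 * 2 * m)%N -?mulnA ?expnM //; lia.
have em : (4 ^ m = 2 ^ 2 * 2 ^ (2 * m - 2))%N by rewrite expn2_subnK ?expnM //; lia.
rewrite hF; case: (plus) => /=.
  by rewrite (_ : 2 * m - m = m)%N ?expnS; lia.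
by rewrite prednK // (_ : 2 * m - m.-1 = m.+1)%N ?expnS; lia.
Qed.

Lemma card_adj_level_F4 a : Q a = mu ->
  (#|[set b | (Q b == mu) && ((a != b) && (tr4 (polar Q a b) == 0))]| : int)
    = (2 ^ (4 * m - 3))%N%:Z
      - (if plus then (2 ^ (2 * m - 2))%N%:Z else - (2 ^ (2 * m - 2))%N%:Z) - 1.
Proof.
move=> Qa; have := card_level_polar_trace0 hF hQ hnd hmu Qa.
have tr4_0 : tr4 (0 : F) = 0 by rewrite /tr4 expr0n addr0.
rewrite card_level_F4 (cardsD1 a) !inE Qa eqxx polarxx ?pchar_F4 // tr4_0 eqxx /=.
have -> : [set b | (Q b == mu) && (tr4 (polar Q a b) == 0)] :\ a
        = [set b | (Q b == mu) && ((a != b) && (tr4 (polar Q a b) == 0))].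
  by apply/setP => b; rewrite !inE eq_sym andbCA.
have e2m : (4 ^ (2 * m) = 2 ^ 3 * 2 ^ (4 * m - 3))%N.
  by rewrite expn2_subnK -?[(4 * m)%N]/(2 * 2 * m)%N -?mulnA ?expnM //; lia.
have em : (2 ^ (4 * m - 2) = 2 * 2 ^ (4 * m - 3))%N.
  by rewrite -expnS; congr (2 ^ _)%N; lia.
rewrite e2m em -[(2 ^ 3)%N]/8%N.
set D := #|_|; set x := (2 ^ (4 * m - 3))%N; set y := (2 ^ (2 * m - 2))%N.
by case: (plus) => /=; lia.
Qed.

End FormOfTypeF4.

Theorem proposition4p8 (F : finFieldType) (hF : #|F| = 4%N) (m : nat) (hm : (1 <= m)%N)
  (Q : 'rV[F]_(2 * m) -> F) (plus : bool)
  (hQ : is_quadform Q) (hnd : qf_nondegenerate Q) (htype : qf_type Q plus)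
  (lam : F) (hlam : lam ^+ 2 + lam + 1 = 0) :
  let X := [set a | tr4 (Q a) == 1] in
  let adj1 : rel 'rV[F]_(2 * m) := fun a b => (a != b) && (tr4 (polar Q a b) == 0) in
  let adj2 : rel 'rV[F]_(2 * m) := fun a b => (a != b) && (Q (a + b) == (polar Q a b) ^+ 2) in
  let A := [set a | Q a == lam] in
  let B := [set a | Q a == lam + 1] in
  [/\ X = A :|: B,
      {in X &, forall a b, adj2 a b = seidel_switch adj1 A a b} /\
      {in X &, forall a b, adj2 a b = seidel_switch adj1 B a b},
      #|A| = (if plus then 2 ^ (4 * m - 2) - 2 ^ (2 * m - 2) else 2 ^ (4 * m - 2) + 2 ^ (2 * m - 2))%N,
      #|B| = #|A| &
      forall (G : rel 'rV[F]_(2 * m)), G = adj1 \/ G = adj2 ->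
      forall Y : {set 'rV[F]_(2 * m)}, Y = A \/ Y = B ->
      {in Y, forall a, (#|[set b in Y | G a b]| : int) =
          (2 ^ (4 * m - 3))%N%:Z - (if plus then (2 ^ (2 * m - 2))%N%:Z else - (2 ^ (2 * m - 2))%N%:Z) - 1}].
Proof.
move=> X adj1 adj2 A B.
have charF := pchar_F4 hF.
have hlam1 := root_succ charF hlam.
have XAB : X = A :|: B by apply/setP => a; rewrite !inE (tr4_eq1 charF hlam).
have inB a : a \in X -> (a \in B) = (a \notin A).
  by rewrite XAB !inE => /orP[]/eqP->; rewrite eqxx ?(eq_sym lam) (negbTE (succ_neq lam)).
have switchA a b : a \in X -> b \in X -> adj2 a b = seidel_switch adj1 A a b.
  rewrite !inE => aX bX; rewrite /adj2 /seidel_switch /adj1 !inE.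
  rewrite (quadformD_eq_sqr hF hlam aX bX).
  by case: (Q a == lam); case: (Q b == lam); case: (a != b).
split.
- exact: XAB.
- split=> a b aX bX; first exact: switchA.
  by rewrite switchA // /seidel_switch !inB // (inj_eq negb_inj).
- exact: card_level_F4.
- by rewrite (card_level_F4 hF hm hQ hnd htype hlam1) (card_level_F4 hF hm hQ hnd htype hlam).
move=> G hG Y hY a aY.
have [mu hmu defY] : exists2 mu, mu ^+ 2 + mu + 1 = 0 & Y = [set b | Q b == mu].
  by case: hY => ->; [exists lam | exists (lam + 1)].
have /eqP Qa : Q a == mu by rewrite defY inE in aY.
rewrite -(card_adj_level_F4 hF hm hQ hnd htype hmu Qa); congr ((_ : nat) : int).
apply: eq_card => b; rewrite defY !inE.
case: (eqVneq (Q b) mu) => //= Qb; case: hG => -> //.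
by rewrite /adj2 quadformD // Qa Qb addr_eq_sqr_tr4 // addrr_pchar2.
Qed.
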